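(* Let $n\in\mathbb{N}$, $n\geq 1$. For each $k\in\{0,1,2,\ldots,n^2\}$ there exists a polyanalytic polynomial of degree $n$ with exactly $k$ distinct zeros, and there exists a polyanalytic polynomial of degree $n$ with infinitely many zeros.
   Context: A polyanalytic polynomial is a function $\mathbb{C}\to\mathbb{C}$ of the form $P(z,\bar z)=\sum_{j+k\le n}\alpha_{j,k} z^j \bar z^{k}$ with complex coefficients (a polynomial in $z$ and $\bar z$). Its degree is the largest $j+k$ with $\alpha_{j,k}\neq 0$. A zero of $P$ is a point $z\in\mathbb{C}$ with $P(z,\bar z)=0$. *)

From HB Require Import structures.
From mathcomp Require Import all_boot all_order all_algebra.
From mathcomp Require Import complex.
From mathcomp Require Import Rstruct.
From Stdlib Require Rdefinitions.
Set Implicit Arguments. Unset Strict Implicit. Unset Printing Implicit Defensive.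
Import Order.TTheory GRing.Theory Num.Theory.
Local Open Scope ring_scope.

Definition C : Type := (Rdefinitions.R)[i].

Definition polyan_sum (n : nat) (a : nat -> nat -> C) (z : C) : C :=
  \sum_(j < n.+1) \sum_(k < n.+1 | ((j : nat) + (k : nat) <= n)%N)
     a j k * z ^+ j * (z^*)%C ^+ k.

Definition polyanalytic_of_degree (n : nat) (P : C -> C) : Prop :=
  exists a : nat -> nat -> C,
    (forall z, P z = polyan_sum n a z) /\
    (exists j k : nat, (j + k)%N = n /\ a j k != 0).

Definition has_exactly_zeros (P : C -> C) (m : nat) : Prop :=
  exists s : seq C, uniq s /\ size s = m /\ (forall z, P z = 0 <-> z \in s).

Definition has_infinitely_many_zeros (P : C -> C) : Prop :=
  forall s : seq C, exists z, P z = 0 /\ z \notin s.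

(* Write X = Re z and Y = Im z, two polyanalytic polynomials of degree 1.  If
   F and H are real-valued polynomials in X and Y, the zeros of F + iH are the
   common zeros of F and H.  For k = q n + r with r < n, let F be the product
   of the q + [r > 0] <= n vertical lines X = c (c = 1..q, and c = 0 if r > 0)
   and H the product of the n lines Y = j X + min(j, r - 1), j < n.  A vertical
   line X = c >= 1 meets them in n distinct points, the line X = 0 in exactly
   the r points Y = 0..r-1, so F + iH has q n + r zeros; scaling H by 1 or 2
   keeps the coefficient of z^n nonzero, so the degree is n.  Finally X^n
   vanishes on the whole imaginary axis. *)

From mathcomp Require Import all_boot all_order all_algebra.
From mathcomp Require Import polyXY complex Rstruct.
From mathcomp Require Import zify.
Set Implicit Arguments. Unset Strict Implicit. Unset Printing Implicit Defensive.
Import GRing.Theory Num.Theory.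
Local Open Scope ring_scope.

Lemma exists_addrMn_neq0 (V : nmodType) (a b : V) :
  b != 0 -> exists2 l, (0 < l)%N & a + b *+ l != 0.
Proof.
move=> b_neq0; have [ab_eq0|] := eqVneq (a + b) 0; last by exists 1%N.
by exists 2%N => //; rewrite mulr2n addrA ab_eq0 add0r.
Qed.

(* A polyanalytic polynomial is a bivariate polynomial Q evaluated as
   Q.[z^*, z]: 'X stands for conj z and 'Y for z, so Q`_k`_j is the
   coefficient of (conj z)^k z^j, and coefY m Q that of z^m. *)
Section BivariatePolynomials.
Variable R : comNzRingType.
Implicit Types (P Q : {poly {poly R}}) (c x y : R).

Definition bideg_le (m : nat) Q := forall j k, (m < j + k)%N -> Q`_k`_j = 0.

Definition coefY (m : nat) Q := Q`_0`_m.

Lemma bideg_leW m m' Q : (m <= m')%N -> bideg_le m Q -> bideg_le m' Q.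
Proof. by move=> lemm' hQ j k hjk; apply: hQ; lia. Qed.

Lemma bideg_leD m P Q : bideg_le m P -> bideg_le m Q -> bideg_le m (P + Q).
Proof. by move=> hP hQ j k hjk; rewrite !coefD hP // hQ // addr0. Qed.

Lemma bideg_leB m P Q : bideg_le m P -> bideg_le m Q -> bideg_le m (P - Q).
Proof. by move=> hP hQ j k hjk; rewrite !coefB hP // hQ // subr0. Qed.

Lemma bideg_leC c : bideg_le 0 c%:P%:P.
Proof.
move=> j [|k] hjk; rewrite coefC /= ?coef0 // coefC.
by case: j hjk.
Qed.

Lemma bideg_le_nat i : bideg_le 0 i%:R.
Proof.
have -> : (i%:R : {poly {poly R}}) = (i%:R : R)%:P%:P by rewrite !rmorph_nat.
exact: bideg_leC.
Qed.

Lemma bideg_leY : bideg_le 1 'Y.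
Proof.
move=> j [|k] hjk; rewrite coefC /= ?coef0 // coefX.
by case: j hjk => [|[]].
Qed.

Lemma bideg_leX : bideg_le 1 'X.
Proof.
move=> j [|[|k]] hjk; rewrite coefX /= ?coef0 // coefC.
by case: j hjk.
Qed.

Lemma bideg_leM m l P Q : bideg_le m P -> bideg_le l Q -> bideg_le (m + l) (P * Q).
Proof.
move=> hP hQ j k hjk; rewrite coefM coef_sum big1 // => i _.
rewrite coefM big1 // => i' _.
have lt_i := ltn_ord i; have lt_i' := ltn_ord i'.
case: (ltnP m (i' + i)) => [lt_m|le_m]; first by rewrite hP // mul0r.
by rewrite hQ ?mulr0 //; lia.
Qed.

Lemma coefYD m P Q : coefY m (P + Q) = coefY m P + coefY m Q.
Proof. by rewrite /coefY !coefD. Qed.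

Lemma coefYB m P Q : coefY m (P - Q) = coefY m P - coefY m Q.
Proof. by rewrite /coefY !coefB. Qed.

Lemma coefY_Y : coefY 1 'Y = 1 :> R.
Proof. by rewrite /coefY coefC coefX. Qed.

Lemma coefY_X : coefY 1 'X = 0 :> R.
Proof. by rewrite /coefY coefX coef0. Qed.

Lemma coefY_nat m i : coefY m.+1 i%:R = 0 :> R.
Proof. exact: bideg_le_nat. Qed.

Lemma coefYMn m i Q : coefY m (Q *+ i) = coefY m Q *+ i.
Proof. by rewrite /coefY !coefMn. Qed.

Lemma coefYCM m c Q : coefY m (c%:P%:P * Q) = c * coefY m Q.
Proof. by rewrite /coefY !coefCM. Qed.

Lemma coefYM m l P Q : bideg_le m P -> bideg_le l Q ->
  coefY (m + l) (P * Q) = coefY m P * coefY l Q.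
Proof.
move=> hP hQ; rewrite /coefY coef0M coefM.
rewrite (bigD1 (@Ordinal (m + l).+1 m (leq_addr l m))) //= big1 ?addr0 ?addKn //.
move=> i /eqP neq_im.
have lt_i := ltn_ord i; case: (ltnP m i) => [lt_m|le_i]; first by rewrite hP ?mul0r //; lia.
have {}neq_im : i <> m :> nat by move=> e; apply: neq_im; apply: val_inj.
by rewrite hQ ?mulr0 //; lia.
Qed.

Lemma bideg_le_prod I (s : seq I) (G : I -> {poly {poly R}}) :
  (forall i, bideg_le 1 (G i)) -> bideg_le (size s) (\prod_(i <- s) G i).
Proof.
move=> hG; elim: s => [|i s IH]; first by rewrite big_nil -!polyC1; apply: bideg_leC.
by rewrite big_cons; exact: bideg_leM (hG i) IH.
Qed.

Lemma coefY_prod I (s : seq I) (G : I -> {poly {poly R}}) :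
  (forall i, bideg_le 1 (G i)) ->
  coefY (size s) (\prod_(i <- s) G i) = \prod_(i <- s) coefY 1 (G i).
Proof.
move=> hG; elim: s => [|i s IH]; first by rewrite !big_nil /coefY !coef1.
by rewrite !big_cons -IH -coefYM //; apply: bideg_le_prod.
Qed.

Lemma horner_bideg_le n Q x y : bideg_le n Q ->
  Q.[x, y] =
  \sum_(j < n.+1) \sum_(k < n.+1 | (j + k <= n)%N) Q`_k`_j * y ^+ j * x ^+ k.
Proof.
move=> hQ; have size_coef k : (n < k)%N -> Q`_k = 0.
  by move=> ltnk; apply/polyP => j; rewrite coef0 hQ //; lia.
rewrite (@horner_coef_wide _ n.+1 Q); last by apply/leq_sizeP => k /size_coef.
rewrite horner_sum.
transitivity (\sum_(k < n.+1) \sum_(j < n.+1) Q`_k`_j * y ^+ j * x ^+ k).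
  apply: eq_bigr => k _; rewrite hornerM -rmorphXn hornerC.
  rewrite (@horner_coef_wide _ n.+1 Q`_k) ?big_distrl //.
  by apply/leq_sizeP => i leni; apply: hQ; lia.
rewrite exchange_big /=; apply: eq_bigr => j _; rewrite [RHS]big_mkcond /=.
apply: eq_bigr => k _; case: ifP => // gt_jk.
by rewrite hQ ?mul0r //; lia.
Qed.

Lemma hornerXY_nat i x y : (i%:R : {poly {poly R}}).[x, y] = i%:R.
Proof. by rewrite -!polyC_natr !hornerC. Qed.

Lemma bideg_le_exp m e Q : bideg_le m Q -> bideg_le (m * e) (Q ^+ e).
Proof.
move=> hQ; elim: e => [|e IH]; first by rewrite muln0 expr0 -!polyC1; apply: bideg_leC.
by rewrite exprS mulnS; apply: bideg_leM.
Qed.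

Lemma coefY_exp m e Q : bideg_le m Q -> coefY (m * e) (Q ^+ e) = coefY m Q ^+ e.
Proof.
move=> hQ; elim: e => [|e IH]; first by rewrite muln0 !expr0 /coefY !coef1.
by rewrite !exprS mulnS coefYM ?IH //; apply: bideg_le_exp.
Qed.

End BivariatePolynomials.

Local Open Scope complex_scope.

Implicit Types (z : C) (cs : seq nat) (b : nat -> nat).

Lemma polyanalytic_of_degree_bipoly n Q :
  bideg_le n Q -> coefY n Q != 0 -> polyanalytic_of_degree n (fun z => Q.[z^*, z]).
Proof.
move=> hQ hQn; exists (fun j k => Q`_k`_j); split; last by exists n, 0%N; rewrite addn0.
by move=> z; rewrite (horner_bideg_le _ _ hQ).
Qed.

Definition bipoly_Re : {poly {poly C}} := (2^-1)%:P%:P * ('Y + 'X).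

Definition bipoly_Im : {poly {poly C}} := (2^-1 * 'i)%:P%:P * ('X - 'Y).

Lemma horner_bipoly_Re z : bipoly_Re.[z^*, z] = (complex.Re z)%:C.
Proof. by rewrite ReJ_add !hornerE mulrC. Qed.

Lemma horner_bipoly_Im z : bipoly_Im.[z^*, z] = (complex.Im z)%:C.
Proof. by rewrite ImJ_sub !hornerE mulrC mulrA. Qed.

Lemma bideg_le_Re : bideg_le 1 bipoly_Re.
Proof.
rewrite -[1%N]add0n; apply: bideg_leM; first exact: bideg_leC.
by apply: bideg_leD; [exact: bideg_leY | exact: bideg_leX].
Qed.

Lemma bideg_le_Im : bideg_le 1 bipoly_Im.
Proof.
rewrite -[1%N]add0n; apply: bideg_leM; first exact: bideg_leC.
by apply: bideg_leB; [exact: bideg_leX | exact: bideg_leY].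
Qed.

Lemma coefY_Re : coefY 1 bipoly_Re = 2^-1.
Proof. by rewrite coefYCM coefYD coefY_Y coefY_X addr0 mulr1. Qed.

Lemma coefY_Im : coefY 1 bipoly_Im = - (2^-1 * 'i).
Proof. by rewrite coefYCM coefYB coefY_Y coefY_X sub0r mulrN1. Qed.

Definition vertical_line (c : nat) : {poly {poly C}} := bipoly_Re - c%:R.

Definition slanted_line (j m : nat) : {poly {poly C}} :=
  bipoly_Im - j%:R * bipoly_Re - m%:R.

Definition vertical_lines cs : {poly {poly C}} := \prod_(c <- cs) vertical_line c.

Definition slanted_lines n b : {poly {poly C}} :=
  \prod_(j <- iota 0 n) slanted_line j (b j).

(* Both products take real values, so the zeros of crossing_poly are the
   intersection points of the lines; l only serves to keep the coefficient of
   z^n nonzero. *)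
Definition crossing_poly cs n b (l : nat) : {poly {poly C}} :=
  vertical_lines cs + ('i * l%:R)%:P%:P * slanted_lines n b.

Lemma bideg_le_vertical_line c : bideg_le 1 (vertical_line c).
Proof. exact: bideg_leB bideg_le_Re (bideg_leW _ (bideg_le_nat _ _)). Qed.

Lemma bideg_le_slanted_line j m : bideg_le 1 (slanted_line j m).
Proof.
apply: bideg_leB (bideg_leW _ (bideg_le_nat _ _)) => //.
apply: bideg_leB bideg_le_Im _; rewrite -[1%N]add0n.
exact: bideg_leM (bideg_le_nat _ _) bideg_le_Re.
Qed.

Lemma i_plus_nat_neq0 j : 'i + j%:R != 0 :> C.
Proof.
rewrite -(rmorph_nat (real_complex Rdefinitions.R)); apply/eqP.
by move=> /(congr1 (@complex.Im _)) /= /eqP; rewrite addr0 oner_eq0.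
Qed.

Lemma coefY_slanted_line_neq0 j m : coefY 1 (slanted_line j m) != 0.
Proof.
rewrite !coefYB coefY_nat mulr_natl coefYMn coefY_Re coefY_Im subr0.
have -> : - (2^-1 * 'i) - 2^-1 *+ j = - (2^-1 * ('i + j%:R)) :> C.
  by rewrite mulrDr opprD mulr_natr.
by rewrite oppr_eq0 mulf_neq0 ?i_plus_nat_neq0 // invr_eq0 pnatr_eq0.
Qed.

Lemma bideg_le_vertical_lines cs : bideg_le (size cs) (vertical_lines cs).
Proof. exact: bideg_le_prod bideg_le_vertical_line. Qed.

Lemma bideg_le_slanted_lines n b : bideg_le n (slanted_lines n b).
Proof.
rewrite -[n in bideg_le n](size_iota 0).
by apply: bideg_le_prod => j; apply: bideg_le_slanted_line.
Qed.

Lemma coefY_slanted_lines_neq0 n b : coefY n (slanted_lines n b) != 0.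
Proof.
rewrite -[n in coefY n](size_iota 0) coefY_prod; last first.
  by move=> j; apply: bideg_le_slanted_line.
by rewrite prodf_seq_neq0; apply/allP => j _; apply: coefY_slanted_line_neq0.
Qed.

Lemma horner_vertical_lines cs z : (vertical_lines cs).[z^*, z] =
  (\prod_(c <- cs) (complex.Re z - c%:R))%:C.
Proof.
rewrite !horner_prod rmorph_prod; apply: eq_bigr => c _; rewrite /vertical_line.
by rewrite !(hornerD, hornerN) hornerXY_nat (horner_bipoly_Re z) rmorphB rmorph_nat.
Qed.

Lemma horner_slanted_lines n b z : (slanted_lines n b).[z^*, z] =
  (\prod_(j <- iota 0 n) (complex.Im z - j%:R * complex.Re z - (b j)%:R))%:C.
Proof.
rewrite !horner_prod rmorph_prod; apply: eq_bigr => j _; rewrite /slanted_line.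
rewrite [RHS](_ : _ = (complex.Im z)%:C - j%:R * (complex.Re z)%:C - (b j)%:R).
  rewrite -(horner_bipoly_Re z) -(horner_bipoly_Im z).
  by rewrite !(hornerD, hornerN, hornerM) !hornerXY_nat.
by rewrite !rmorphB rmorphM !rmorph_nat.
Qed.

Lemma complex_of_parts (a c : Rdefinitions.R) : a%:C + 'i * c%:C = (a +i* c) :> C.
Proof. by rewrite [RHS]complexE. Qed.

Definition crossing_points cs n b : seq C :=
  [seq (c%:R +i* (j * c + b j)%:R) | c <- cs, j <- iota 0 n].

Lemma crossing_poly_root cs n b l z : (0 < l)%N ->
  ((crossing_poly cs n b l).[z^*, z] == 0) = (z \in crossing_points cs n b).
Proof.
move=> l_gt0; rewrite !(hornerD, hornerM) !hornerC.
rewrite horner_vertical_lines horner_slanted_lines -mulrA.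
rewrite -(rmorph_nat (real_complex Rdefinitions.R)) -rmorphM.
rewrite complex_of_parts eq_complex /= mulf_eq0 pnatr_eq0 eqn0Ngt l_gt0 /= !prodf_seq_eq0.
apply/andP/allpairsP => [[/hasP [c c_in /eqP Re_z] /hasP [j j_in /eqP Im_z]]|].
  exists (c, j); split => //=; case: z Re_z Im_z => x y /=.
  move=> /eqP; rewrite subr_eq0 => /eqP -> /eqP; rewrite subr_eq0 subr_eq => /eqP ->.
  by rewrite natrD natrM addrC.
move=> [[c j] [/= c_in j_in ->]] /=; split; apply/hasP; [exists c | exists j] => //=.
  by rewrite subrr.
by rewrite natrD natrM addrAC addrK subrr.
Qed.

Lemma crossing_poly_of_degree cs n b : (size cs <= n)%N ->
  exists2 l, (0 < l)%N &
    polyanalytic_of_degree n (fun z => (crossing_poly cs n b l).[z^*, z]).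
Proof.
move=> size_cs; have i_neq0 : 'i != 0 :> C.
  by have := i_plus_nat_neq0 0; rewrite mulr0n addr0.
have [l l_gt0 coefY_neq0] := exists_addrMn_neq0 (coefY n (vertical_lines cs))
  (mulf_neq0 i_neq0 (coefY_slanted_lines_neq0 n b)).
exists l => //; apply: polyanalytic_of_degree_bipoly.
  apply: bideg_leD; first by apply: bideg_leW size_cs _; apply: bideg_le_vertical_lines.
  rewrite -[n in bideg_le n]add0n.
  exact: bideg_leM (bideg_leC _) (bideg_le_slanted_lines b).
by rewrite coefYD coefYCM mulrAC mulr_natr.
Qed.

Lemma crossing_points_cat cs1 cs2 n b :
  crossing_points (cs1 ++ cs2) n b = crossing_points cs1 n b ++ crossing_points cs2 n b.
Proof. exact: allpairs_cat. Qed.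

Lemma uniq_crossing_points cs n b : uniq cs -> 0%N \notin cs ->
  {homo b : i j / (i <= j)%N} -> uniq (crossing_points cs n b).
Proof.
move=> uniq_cs cs_neq0 b_homo; apply: allpairs_uniq => //; first exact: iota_uniq.
move=> _ [c' j'] /allpairsP [[c j] /= [c_in _ ->]] _ [] /=.
move=> /eqP; rewrite eqr_nat => /eqP eq_cc'; subst c'.
have c_gt0 : (0 < c)%N by case: c c_in cs_neq0 => // ->.
have column_inj : injective (fun j => j * c + b j).
  apply/incn_inj/leq_mono => i i' lt_ii'.
  rewrite -addSn; apply: leq_add; first by rewrite ltn_pmul2r.
  exact/b_homo/ltnW.
by move=> /eqP; rewrite eqr_nat => /eqP /column_inj ->.
Qed.

Lemma crossing_points_axis n r : (r < n)%N ->
  crossing_points (nseq (0 < r)%N 0%N) n (fun j => minn j r.-1) =i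
  [seq 0 +i* j%:R | j <- iota 0 r].
Proof.
case: r => [|r] lt_rn z //; rewrite /crossing_points [X in X = _]/= cats0.
apply/mapP/mapP => [[j _ ->]|[j j_in ->]].
  by exists (minn j r); [rewrite mem_iota; lia | rewrite muln0].
rewrite mem_iota in j_in; exists j; first by rewrite mem_iota; lia.
by rewrite muln0 add0n (minn_idPl _) //; lia.
Qed.

Lemma has_infinitely_many_zeros_inj (P : C -> C) (f : nat -> C) :
  injective f -> (forall i, P (f i) = 0) -> has_infinitely_many_zeros P.
Proof.
move=> f_inj Pf_eq0 s; have [sub_s|] := boolP (all (mem s) (map f (iota 0 (size s).+1))).
  have uniq_f : uniq (map f (iota 0 (size s).+1)) by rewrite map_inj_uniq // iota_uniq.
  have := uniq_leq_size uniq_f (allP sub_s).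
  by rewrite size_map size_iota ltnn.
by case/allPn => _ /mapP [i _ ->] fi_notin; exists (f i).
Qed.

Lemma polyanalytic_with_exactly_zeros n q r : (r < n)%N -> (q + (0 < r) <= n)%N ->
  exists P, polyanalytic_of_degree n P /\ has_exactly_zeros P (q * n + r).
Proof.
move=> lt_rn size_le; set b := fun j => minn j r.-1.
set cs := iota 1 q ++ nseq (0 < r)%N 0%N.
have [|l l_gt0 P_deg] := @crossing_poly_of_degree cs n b.
  by rewrite size_cat size_iota size_nseq.
exists (fun z => (crossing_poly cs n b l).[z^*, z]); split => //.
exists (crossing_points (iota 1 q) n b ++ [seq 0 +i* j%:R | j <- iota 0 r]).
split; last split.
- rewrite cat_uniq uniq_crossing_points ?iota_uniq ?mem_iota //=; last first.
    by move=> i j le_ij; rewrite /b; lia.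
  rewrite map_inj_uniq ?iota_uniq ?andbT; last first.
    by move=> i j [] /eqP; rewrite eqr_nat => /eqP.
  apply/hasPn => _ /mapP [j _ ->]; apply/negP => /allpairsP [[c j'] [/= c_in _ []]].
  by move=> /esym/eqP; rewrite pnatr_eq0 => /eqP c_eq0; rewrite c_eq0 mem_iota in c_in.
- by rewrite size_cat /crossing_points size_allpairs !size_map !size_iota.
- move=> z; rewrite (rwP eqP) crossing_poly_root // crossing_points_cat !mem_cat.
  by rewrite (crossing_points_axis lt_rn).
Qed.

Lemma polyanalytic_with_infinitely_many_zeros n : (0 < n)%N ->
  exists P, polyanalytic_of_degree n P /\ has_infinitely_many_zeros P.
Proof.
move=> n_gt0; exists (fun z => (bipoly_Re ^+ n).[z^*, z]); split.
  apply: polyanalytic_of_degree_bipoly.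
    by rewrite -[n in bideg_le n]mul1n; apply: bideg_le_exp bideg_le_Re.
  rewrite -[n in coefY n]mul1n (coefY_exp _ bideg_le_Re) coefY_Re.
  by rewrite expf_neq0 // invr_eq0 pnatr_eq0.
apply: (@has_infinitely_many_zeros_inj _ (fun i => 0 +i* i%:R)).
  by move=> i j [] /eqP; rewrite eqr_nat => /eqP.
by move=> i; rewrite !horner_exp horner_bipoly_Re expr0n eqn0Ngt n_gt0.
Qed.

Lemma divn_add_modn_gt0_leq k n : (0 < n)%N -> (k <= n ^ 2)%N ->
  (k %/ n + (0 < k %% n) <= n)%N.
Proof.
move=> n_gt0; rewrite {1}(divn_eq k n) expnS expn1.
by have := ltn_pmod k n_gt0; nia.
Qed.

Theorem theorem2p16 (n : nat) (hn : (1 <= n)%N) :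
  (forall k : nat, (k <= n ^ 2)%N ->
     exists P : C -> C, polyanalytic_of_degree n P /\ has_exactly_zeros P k) /\
  (exists P : C -> C, polyanalytic_of_degree n P /\ has_infinitely_many_zeros P).
Proof.
split; last exact: polyanalytic_with_infinitely_many_zeros.
move=> k le_k_nn; rewrite (divn_eq k n).
apply: polyanalytic_with_exactly_zeros; first by rewrite ltn_pmod.
exact: divn_add_modn_gt0_leq.
Qed.
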